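(* Let $\alpha\ge1$ and consider the WBDF3 coefficients $(a_0,a_1,a_2)=(\tfrac32\alpha+\tfrac13,\ \tfrac56-2\alpha,\ \tfrac12\alpha-\tfrac16)$, $(b_0,\dots,b_3)=(\alpha,1-\alpha,0,0)$, $(c_0,c_1,c_2)=(2\alpha+1,-3\alpha,\alpha)$. Then $$\sigma_{\mathrm{F}}=1,\quad\sigma_{\mathrm{E}}=\frac{3(6\alpha+1)}{2(6\alpha-1)},\quad\lambda_{\mathrm{I}}=\frac{3(2\alpha-1)}{2(6\alpha-1)},\quad\text{so that}\quad\mathfrak{I}_{\mathrm{IE}}=\frac{2\alpha-1}{6\alpha+1}.$$
   Context: For coefficient vectors $(a_j)_{j=0}^{\mathrm{k}-1}$, $(b_j)_{j=0}^{\mathrm{k}}$, $(c_j)_{j=0}^{\mathrm{k}-1}$ define $a(\theta)=\sum_j a_je^{\imath j\theta}$, $b(\theta)=\sum_j b_je^{\imath j\theta}$, $c(\theta)=\sum_jc_je^{\imath j\theta}$ and $\sigma_{\mathrm{F}}=\max_{\theta\in[0,2\pi)}|1/a(\theta)|$, $\sigma_{\mathrm{E}}=\max_{\theta\in[0,2\pi)}|c(\theta)/a(\theta)|$, $\lambda_{\mathrm{I}}=\min_{\theta\in[0,2\pi)}\Re[b(\theta)/a(\theta)]$, $\mathfrak{I}_{\mathrm{IE}}=\lambda_{\mathrm{I}}/\sigma_{\mathrm{E}}$. Here $\mathrm{k}=3$. *)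

From HB Require Import structures.
From mathcomp Require Import all_boot all_order all_algebra.
From mathcomp Require Import all_classical all_reals all_analysis.
From mathcomp Require Import complex.
Set Implicit Arguments. Unset Strict Implicit. Unset Printing Implicit Defensive.
Import Order.TTheory GRing.Theory Num.Theory.
Local Open Scope ring_scope.
Local Open Scope complex_scope.

Definition cexpi (R : realType) (t : R) : R[i] := cos t +i* sin t.

Definition trigpoly (R : realType) (s : seq R) (t : R) : R[i] :=
  \sum_(j < size s) (s`_j)%:C * cexpi (j%:R * t).

Definition is_max_on (R : realType) (f : R -> R) (v : R) : Prop :=
  (exists2 t, (0 <= t /\ t < 2 * pi) & f t = v) /\
  (forall t, 0 <= t -> t < 2 * pi -> f t <= v).

Definition is_min_on (R : realType) (f : R -> R) (v : R) : Prop :=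
  (exists2 t, (0 <= t /\ t < 2 * pi) & f t = v) /\
  (forall t, 0 <= t -> t < 2 * pi -> v <= f t).

Definition is_sigmaF (R : realType) (a : seq R) (v : R) : Prop :=
  is_max_on (fun t => Normc.normc ((trigpoly a t)^-1)) v.

Definition is_sigmaE (R : realType) (a c : seq R) (v : R) : Prop :=
  is_max_on (fun t => Normc.normc (trigpoly c t / trigpoly a t)) v.

Definition is_lambdaI (R : realType) (a b : seq R) (v : R) : Prop :=
  is_min_on (fun t => complex.Re (trigpoly b t / trigpoly a t)) v.

Definition wbdf3_a (R : realType) (al : R) : seq R :=
  [:: 3/2 * al + 1/3; 5/6 - 2 * al; 1/2 * al - 1/6].
Definition wbdf3_b (R : realType) (al : R) : seq R :=
  [:: al; 1 - al; 0; 0].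
Definition wbdf3_c (R : realType) (al : R) : seq R :=
  [:: 2 * al + 1; - (3 * al); al].

From HB Require Import structures.
From mathcomp Require Import all_boot all_order all_algebra.
From mathcomp Require Import all_classical all_reals all_analysis.
From mathcomp Require Import complex.
From mathcomp Require Import ring lra.
Import Order.TTheory GRing.Theory Num.Theory.
Local Open Scope ring_scope.

(* With c = cos θ, the quantities |a(θ)|², |c(θ)|² and Re(b(θ) conj a(θ)) are
   polynomials in c.  Each claimed extremum is attained at θ = 0 or θ = π, i.e.
   c = ±1, and the corresponding inequality factors as (1 ∓ c) times a function
   affine in c; that function is nonnegative on [-1, 1] because its values at
   c = ±1 are polynomials in α that are nonnegative for α ≥ 1. *)

Lemma affine_ge0 (R : realFieldType) (k m x : R) :
  -1 <= x <= 1 -> 0 <= m - k -> 0 <= m + k -> 0 <= k * x + m.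
Proof. by move=> /andP[? ?] ? ?; nra. Qed.

Lemma sqrt_div_le (R : rcfType) (x y u v : R) :
  0 < y -> 0 < u -> 0 < v -> v ^+ 2 * x <= u ^+ 2 * y ->
  Num.sqrt x / Num.sqrt y <= u / v.
Proof.
move=> hy hu hv hxy; have [hx|/ltr0_sqrtr->] := leP 0 x; last first.
  by rewrite mul0r divr_ge0 ?ltW.
rewrite ler_pdivrMr ?sqrtr_gt0 // mulrAC ler_pdivlMr //.
have sqrtM_sqr (w z : R) : 0 < w -> Num.sqrt z * w = Num.sqrt (w ^+ 2 * z).
  by move=> hw; rewrite sqrtrM ?sqr_ge0 // sqrtr_sqr ger0_norm ?ltW // mulrC.
rewrite (sqrtM_sqr v x) // [u * _]mulrC (sqrtM_sqr u y) //.
by rewrite ler_sqrt // mulr_ge0 ?sqr_ge0 ?ltW.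
Qed.

Lemma cos_bounds {R : realType} (t : R) : -1 <= cos t <= 1.
Proof. by rewrite cos_geN1 cos_le1. Qed.

Lemma zero_in_period (R : realType) : 0 <= (0 : R) < 2 * pi.
Proof. by rewrite lexx /= mulr_gt0 ?pi_gt0. Qed.

Lemma pi_in_period (R : realType) : 0 <= (pi : R) < 2 * pi.
Proof. by rewrite pi_ge0 /= ltr_pMl ?pi_gt0 ?ltr1n. Qed.

Lemma is_max_on_at {R : realType} {f : R -> R} {v t0 : R} :
  0 <= t0 < 2 * pi -> f t0 = v -> (forall t, f t <= v) -> is_max_on f v.
Proof. by move=> /andP[? ?] ft0 fle; split; [exists t0 | move=> t _ _]. Qed.

Lemma is_min_on_at {R : realType} {f : R -> R} {v t0 : R} :
  0 <= t0 < 2 * pi -> f t0 = v -> (forall t, v <= f t) -> is_min_on f v.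
Proof. by move=> /andP[? ?] ft0 fge; split; [exists t0 | move=> t _ _]. Qed.

Section TrigPolynomials.
Local Open Scope complex_scope.

Lemma Re_divc (R : rcfType) (u v x y : R) :
  complex.Re ((u +i* v) / (x +i* y)) = (u * x + v * y) / (x ^+ 2 + y ^+ 2).
Proof. by rewrite /= mulrN opprK mulrDl !mulrA. Qed.

Lemma trigpoly3 (R : realType) (p0 p1 p2 t : R) :
  trigpoly [:: p0; p1; p2] t =
  (p0 + p1 * cos t + p2 * (2 * cos t ^+ 2 - 1)) +i* (sin t * (p1 + 2 * p2 * cos t)).
Proof.
rewrite /trigpoly !big_ord_recl big_ord0 /cexpi /= !mulr_natl mulr0n mulr1n.
rewrite cos0 sin0 cos_mulr2n sin_mulr2n; simpc.
by congr Complex; ring.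
Qed.

Lemma trigpoly_rcons0 (R : realType) (s : seq R) (t : R) :
  trigpoly (rcons s 0) t = trigpoly s t.
Proof.
rewrite /trigpoly size_rcons big_ord_recr /= nth_rcons ltnn eqxx rmorph0 mul0r addr0.
by apply: eq_bigr => i _; rewrite nth_rcons ltn_ord.
Qed.

End TrigPolynomials.

Definition wbdf3_sqnorm_a {R : realFieldType} (al c : R) : R :=
  17/18 + 5/18 * c - 2/9 * c ^+ 2 + al * (-7/3 + 8/3 * c - 1/3 * c ^+ 2)
  + al ^+ 2 * (5 - 8 * c + 3 * c ^+ 2).

Definition wbdf3_sqnorm_c {R : realFieldType} (al c : R) : R :=
  1 + 2 * al - 6 * al * c + 4 * al * c ^+ 2 + al ^+ 2 * (10 - 18 * c + 8 * c ^+ 2).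

Definition wbdf3_Re_b_conj_a {R : realFieldType} (al c : R) : R :=
  5/6 + 1/6 * c + al * (-7/3 + 8/3 * c - 1/3 * c ^+ 2) + al ^+ 2 * (3 - 4 * c + c ^+ 2).

Section WBDF3Polynomials.
Context {R : realFieldType} {al c : R}.

Lemma wbdf3_sqnorm_a_ge1 : 1 <= al -> -1 <= c <= 1 -> 1 <= wbdf3_sqnorm_a al c.
Proof.
move=> hal hc; have [_ hc1] := andP hc.
have -> : wbdf3_sqnorm_a al c =
    1 + (1 - c) * ((2/9 + al/3 - 3 * al ^+ 2) * c + (5 * al ^+ 2 - 7/3 * al - 1/18)).
  by rewrite /wbdf3_sqnorm_a; field.
rewrite lerDl; apply: mulr_ge0; first lra.
by apply: affine_ge0 => //; nra.
Qed.

Lemma wbdf3_sigmaE_bound : 1 <= al -> -1 <= c <= 1 ->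
  (2 * (6 * al - 1)) ^+ 2 * wbdf3_sqnorm_c al c <=
  (3 * (6 * al + 1)) ^+ 2 * wbdf3_sqnorm_a al c.
Proof.
move=> hal hc; have [hc1 _] := andP hc.
rewrite -subr_ge0.
have -> : (3 * (6 * al + 1)) ^+ 2 * wbdf3_sqnorm_a al c
          - (2 * (6 * al - 1)) ^+ 2 * wbdf3_sqnorm_c al c =
  9 * ((1 + c) * ((- 20 * al ^+ 4 + 8/3 * al ^+ 3 + 79/9 * al ^+ 2 - 43/9 * al - 2/9) * c
                  + (20 * al ^+ 4 - 8/3 * al ^+ 3 + 11/9 * al ^+ 2 + 121/9 * al + 1/2))).
  by rewrite /wbdf3_sqnorm_a /wbdf3_sqnorm_c; field.
apply/mulr_ge0/mulr_ge0 => //; first lra.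
by apply: affine_ge0 => //; nra.
Qed.

Lemma wbdf3_lambdaI_bound : 1 <= al -> -1 <= c <= 1 ->
  3 * (2 * al - 1) * wbdf3_sqnorm_a al c <= 2 * (6 * al - 1) * wbdf3_Re_b_conj_a al c.
Proof.
move=> hal hc; have [hc1 _] := andP hc.
rewrite -subr_ge0.
have -> : 2 * (6 * al - 1) * wbdf3_Re_b_conj_a al c
          - 3 * (2 * al - 1) * wbdf3_sqnorm_a al c =
  (1 + c) * ((- 6 * al ^+ 3 + 5 * al ^+ 2 + al - 2/3) * c
             + (6 * al ^+ 3 - 5 * al ^+ 2 + 2 * al + 7/6)).
  by rewrite /wbdf3_sqnorm_a /wbdf3_Re_b_conj_a; field.
apply: mulr_ge0; first lra.
by apply: affine_ge0 => //; nra.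
Qed.

Lemma wbdf3_sqnorm_a1 : wbdf3_sqnorm_a al 1 = 1.
Proof. by rewrite /wbdf3_sqnorm_a; field. Qed.

Lemma wbdf3_sqnorm_aN1 : wbdf3_sqnorm_a al (-1) = (2/3 * (6 * al - 1)) ^+ 2.
Proof. by rewrite /wbdf3_sqnorm_a; field. Qed.

Lemma wbdf3_sqnorm_cN1 : wbdf3_sqnorm_c al (-1) = (6 * al + 1) ^+ 2.
Proof. by rewrite /wbdf3_sqnorm_c; field. Qed.

Lemma wbdf3_Re_b_conj_aN1 :
  wbdf3_Re_b_conj_a al (-1) = (2 * al - 1) * (2/3 * (6 * al - 1)).
Proof. by rewrite /wbdf3_Re_b_conj_a; field. Qed.

End WBDF3Polynomials.

Section WBDF3Symbols.
Local Open Scope complex_scope.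
Context {R : realType} {al : R}.

Lemma normc_wbdf3_a t :
  Normc.normc (trigpoly (wbdf3_a al) t) = Num.sqrt (wbdf3_sqnorm_a al (cos t)).
Proof.
rewrite trigpoly3 /=; congr Num.sqrt.
by rewrite exprMn sin2cos2 /wbdf3_sqnorm_a; field.
Qed.

Lemma normc_wbdf3_c t :
  Normc.normc (trigpoly (wbdf3_c al) t) = Num.sqrt (wbdf3_sqnorm_c al (cos t)).
Proof.
rewrite trigpoly3 /=; congr Num.sqrt.
by rewrite exprMn sin2cos2 /wbdf3_sqnorm_c; field.
Qed.

Lemma Re_wbdf3_b_div_a t :
  complex.Re (trigpoly (wbdf3_b al) t / trigpoly (wbdf3_a al) t) =
  wbdf3_Re_b_conj_a al (cos t) / wbdf3_sqnorm_a al (cos t).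
Proof.
rewrite -[wbdf3_b al]/(rcons [:: al; 1 - al; 0] 0) trigpoly_rcons0 !trigpoly3 Re_divc.
rewrite mulrACA -expr2 exprMn sin2cos2.
by congr (_ / _); rewrite /wbdf3_Re_b_conj_a /wbdf3_sqnorm_a; field.
Qed.

End WBDF3Symbols.

Section WBDF3Extrema.
Context {R : realType} {al : R}.

Lemma is_sigmaF_wbdf3 : 1 <= al -> is_sigmaF (wbdf3_a al) 1.
Proof.
move=> hal; rewrite /is_sigmaF; apply: (is_max_on_at (zero_in_period R)) => [|t] /=.
  by rewrite Normc.normcV normc_wbdf3_a cos0 wbdf3_sqnorm_a1 sqrtr1 invr1.
have sqnorm_ge1 := wbdf3_sqnorm_a_ge1 hal (cos_bounds t).
rewrite Normc.normcV normc_wbdf3_a invf_le1 ?sqrtr_gt0 ?(lt_le_trans ltr01) //.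
by rewrite -sqrtr1 ler_sqrt ?(le_trans ler01).
Qed.

Lemma is_sigmaE_wbdf3 : 1 <= al ->
  is_sigmaE (wbdf3_a al) (wbdf3_c al) (3 * (6 * al + 1) / (2 * (6 * al - 1))).
Proof.
move=> hal; have al6m1 : 0 < 6 * al - 1 by lra.
rewrite /is_sigmaE; apply: (is_max_on_at (pi_in_period R)) => [|t] /=;
  rewrite Normc.normcM Normc.normcV normc_wbdf3_a normc_wbdf3_c.
  rewrite cospi wbdf3_sqnorm_aN1 wbdf3_sqnorm_cN1 !sqrtr_sqr !ger0_norm.
  - by field; rewrite gt_eqF.
  - by rewrite mulr_ge0 ?ltW.
  - lra.
have sqnorm_ge1 := wbdf3_sqnorm_a_ge1 hal (cos_bounds t).
by apply: sqrt_div_le; [lra | lra | lra | exact: wbdf3_sigmaE_bound hal (cos_bounds t)].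
Qed.

Lemma is_lambdaI_wbdf3 : 1 <= al ->
  is_lambdaI (wbdf3_a al) (wbdf3_b al) (3 * (2 * al - 1) / (2 * (6 * al - 1))).
Proof.
move=> hal; have al6m1 : 0 < 6 * al - 1 by lra.
rewrite /is_lambdaI; apply: (is_min_on_at (pi_in_period R)) => [|t] /=;
  rewrite Re_wbdf3_b_div_a.
  by rewrite cospi wbdf3_sqnorm_aN1 wbdf3_Re_b_conj_aN1; field; rewrite gt_eqF.
have sqnorm_ge1 := wbdf3_sqnorm_a_ge1 hal (cos_bounds t).
rewrite ler_pdivrMr; last lra.
rewrite mulrAC ler_pdivlMr; last lra.
by rewrite [X in _ <= X]mulrC; exact: wbdf3_lambdaI_bound hal (cos_bounds t).
Qed.

End WBDF3Extrema.

Theorem mainTheorem4 (R : realType) (al : R) (hal : 1 <= al) :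
  let sigmaE := 3 * (6 * al + 1) / (2 * (6 * al - 1)) in
  let lambdaI := 3 * (2 * al - 1) / (2 * (6 * al - 1)) in
  [/\ is_sigmaF (wbdf3_a al) 1,
      is_sigmaE (wbdf3_a al) (wbdf3_c al) sigmaE,
      is_lambdaI (wbdf3_a al) (wbdf3_b al) lambdaI
    & lambdaI / sigmaE = (2 * al - 1) / (6 * al + 1)].
Proof.
split; [exact: is_sigmaF_wbdf3 | exact: is_sigmaE_wbdf3 | exact: is_lambdaI_wbdf3 |].
have al6m1 : 0 < 6 * al - 1 by lra.
have al6p1 : 0 < 6 * al + 1 by lra.
by rewrite /=; field; rewrite !gt_eqF.
Qed.
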